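(* Let $d=2n$ be even, $\omega=e^{2\pi i/d}$, and $F_d=(\omega^{jk})_{j,k=0}^{d-1}$ the Fourier matrix. For $\vec\xi=(\xi_1,\dots,\xi_{n-1})\in\mathbb{R}^{n-1}$ define the real $d\times d$ matrix $R(\vec\xi)$ by $R(\vec\xi)_{j,k}=0$ if $j$ is even, $R(\vec\xi)_{j,k}=0$ if $j$ is odd and $k\equiv0\pmod n$, and $R(\vec\xi)_{j,k}=\xi_{(k \bmod n)}$ otherwise (where $k\bmod n\in\{1,\dots,n-1\}$). Then for every $\vec\xi$ both $F_d\circ\exp(iR(\vec\xi))$ and $F_d\circ\exp(iR(\vec\xi)^t)$ are complex Hadamard matrices.
   Context: A $d\times d$ complex Hadamard matrix has unimodular entries and pairwise orthogonal columns. $\circ$ denotes the entrywise product and $\exp(iR)$ the entrywise exponential $(\exp(iR))_{jk}=e^{iR_{jk}}$; rows and columns are indexed $0,\dots,d-1$. *)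

From HB Require Import structures.
From mathcomp Require Import all_boot all_order all_algebra.
From mathcomp Require Import complex.
From mathcomp Require Import reals trigo.
Set Implicit Arguments. Unset Strict Implicit. Unset Printing Implicit Defensive.
Import Order.TTheory GRing.Theory Num.Theory.
Local Open Scope ring_scope.
Local Open Scope complex_scope.

Definition expi (R : realType) (x : R) : R[i] := (cos x +i* sin x)%C.

Definition is_complex_hadamard (R : realType) (d : nat) (H : 'M[R[i]]_d) : Prop :=
  (forall j k, `|H j k| = 1) /\
  (forall k l : 'I_d, k != l -> \sum_(j < d) H j k * (H j l)^* = 0).

Definition fourier_mx (R : realType) (d : nat) : 'M[R[i]]_d :=
  \matrix_(j < d, k < d) (expi (2 * pi / d%:R : R)) ^+ (j * k).

Definition hadamard_exp (R : realType) (d : nat) (A : 'M[R[i]]_d) (B : 'M[R]_d)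
  : 'M[R[i]]_d := \matrix_(j, k) (A j k * expi (B j k)).

(* R(xi) for d = 2n; xi is given as a function on indices, only xi_1..xi_{n-1} used *)
Definition Rxi (R : realType) (n : nat) (xi : nat -> R) : 'M[R]_(n.*2) :=
  \matrix_(j, k) (if ~~ odd j then 0
                  else if (k %% n == 0)%N then 0 else xi (k %% n)%N).

From HB Require Import structures.
From mathcomp Require Import all_boot all_order all_algebra.
From mathcomp Require Import complex.
From mathcomp Require Import reals trigo.
From mathcomp Require Import ring lra zify.
Set Implicit Arguments. Unset Strict Implicit. Unset Printing Implicit Defensive.
Import Order.TTheory GRing.Theory Num.Theory.
Local Open Scope ring_scope.

(* Write w for the primitive 2n-th root of unity and m = k - l > 0 for two
   columns k > l.  The inner product of columns k and l of F o exp(iB) is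
   sum_j w^(jm) e^(i(B_jk - B_jl)).
   For B = R(xi) the phase difference is c = xi_k - xi_l on odd rows and 0 on
   even rows, so pairing rows 2t, 2t+1 gives (1 + w^m e^(ic)) sum_t w^(2mt).
   The geometric sum vanishes unless m = n, and then w^m = -1 while c = 0
   because xi is n-periodic in the column index.
   For B = R(xi)^t the phase difference depends on j only modulo n: if k and l
   have the same parity it is 0 and the sum is a Fourier orthogonality
   relation; otherwise m is odd, w^((j+n)m) = -w^(jm), and the rows j, j+n
   cancel in pairs. *)

Section ComplexExponential.
Variable R : realType.
Implicit Types x y : R.

Lemma expi0 : expi (0 : R) = 1.
Proof. by rewrite /expi cos0 sin0. Qed.

Lemma expiD x y : expi (x + y) = expi x * expi y.
Proof.
rewrite /expi cosD sinD.
by apply/eqP; rewrite eq_complex /=; apply/andP; split; apply/eqP; ring.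
Qed.

Lemma expiX x k : expi x ^+ k = expi (k%:R * x).
Proof.
elim: k => [|k IHk]; first by rewrite expr0 mul0r expi0.
by rewrite exprS IHk -expiD -natr1 mulrDl mul1r addrC.
Qed.

Lemma expiJ x : (expi x)^* = expi (- x).
Proof. by rewrite /expi cosN sinN. Qed.

Lemma norm_expi x : `|expi x| = 1.
Proof. by rewrite normc_def /= cos2Dsin2 sqrtr1. Qed.

Lemma expi_pi : expi (pi : R) = -1.
Proof. by rewrite /expi cospi sinpi; apply/eqP; rewrite eq_complex /= oppr0 !eqxx. Qed.

(* Equality would force sin (2y) = 2 sin y cos y = 0 and cos (2y) = 1 - 2 sin^2 y = 1. *)
Lemma expi_double_neq1 y : 0 < y < pi -> expi (y + y) != 1.
Proof.
move=> /sin_gt0_pi sin_gt0; apply/eqP => /eqP.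
rewrite eq_complex /= cosD sinD => /andP [/eqP cos2y /eqP sin2y].
have : sin y ^+ 2 = 0 by have := cos2Dsin2 y; nra.
by move/eqP; rewrite sqrf_eq0 => /eqP sin0; rewrite sin0 ltxx in sin_gt0.
Qed.

End ComplexExponential.

Lemma sum_unity_root_eq0 (R : idomainType) (z : R) N :
  z ^+ N = 1 -> z != 1 -> \sum_(i < N) z ^+ i = 0.
Proof.
move=> zN z_neq1; have /esym/eqP := subrX1 z N.
by rewrite zN subrr mulf_eq0 subr_eq0 (negbTE z_neq1) => /eqP.
Qed.

Lemma sum_double_even_odd (V : nmodType) (F : nat -> V) n :
  \sum_(j < n.*2) F j = \sum_(t < n) (F t.*2 + F t.*2.+1).
Proof.
elim: n => [|n IHn]; first by rewrite !big_ord0.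
by rewrite doubleS !big_ord_recr /= IHn addrA.
Qed.

Lemma sum_double_halves (V : nmodType) (F : nat -> V) n :
  \sum_(j < n.*2) F j = \sum_(t < n) (F t + F (t + n)%N).
Proof.
rewrite -addnn big_split_ord big_split /=; congr (_ + _).
by apply: eq_bigr => t _; rewrite addnC.
Qed.

Lemma double_modn_double_neq0 n m :
  (0 < m < n.*2)%N -> m != n -> (m.*2 %% n.*2 != 0)%N.
Proof.
move=> /andP [m_gt0 m_lt]; rewrite -!muln2 -muln_modl // muln_eq0 orbF.
case: ltngtP => // [m_lt_n|n_lt_m] _; first by rewrite modn_small -?lt0n.
rewrite -(subnK (ltnW n_lt_m)) modnDr modn_small -?lt0n ?subn_gt0 //.
by move: m_lt; rewrite -addnn ltn_subLR // ltnW.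
Qed.

Definition fourier_root (R : realType) (d : nat) : R[i] := expi (2 * pi / d%:R).

Section FourierRoot.
Variables (R : realType) (d : nat).
Hypothesis d_gt0 : (0 < d)%N.
Local Notation w := (fourier_root R d).

Lemma fourier_root_exp_order : w ^+ d = 1.
Proof.
rewrite /fourier_root expiX mulrCA divff ?mulr1 ?pnatr_eq0 -?lt0n //.
by rewrite /expi mulr_natl cos2pi sin2pi.
Qed.

Lemma fourier_root_neq1 s : (s %% d != 0)%N -> w ^+ s != 1.
Proof.
move=> s_mod; rewrite (divn_eq s d) exprD mulnC exprM fourier_root_exp_order.
rewrite expr1n mul1r; set r := (s %% d)%N in s_mod *.
have r_lt_d : (r < d)%N by rewrite ltn_mod.
have d_pos : (0 : R) < d%:R by rewrite ltr0n.
rewrite /fourier_root expiX.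
have -> : r%:R * (2 * pi / d%:R) = r%:R * pi / d%:R + r%:R * pi / d%:R :> R.
  by field; rewrite pnatr_eq0 -lt0n.
apply: expi_double_neq1; apply/andP; split.
  by rewrite divr_gt0 // mulr_gt0 ?pi_gt0 // ltr0n lt0n.
by rewrite ltr_pdivrMr // mulrC ltr_pM2l ?pi_gt0 // ltr_nat.
Qed.

Lemma sum_fourier_root_eq0 m : (m %% d != 0)%N ->
  \sum_(j < d) w ^+ (j * m) = 0.
Proof.
move=> m_mod; under eq_bigr do rewrite mulnC exprM.
apply: sum_unity_root_eq0; last exact: fourier_root_neq1.
by rewrite -exprM mulnC exprM fourier_root_exp_order expr1n.
Qed.

End FourierRoot.

Lemma fourier_root_half (R : realType) n : (0 < n)%N ->
  fourier_root R n.*2 ^+ n = -1.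
Proof.
move=> n_gt0; rewrite /fourier_root expiX -expi_pi; congr expi.
by rewrite -muln2 natrM; field; rewrite pnatr_eq0 -lt0n.
Qed.

Section FourierHadamard.
Variables (R : realType) (d : nat).
Local Notation w := (fourier_root R d).
Local Notation H B := (hadamard_exp (fourier_mx R d) B).

Lemma hadamard_exp_fourierE (B : 'M[R]_d) j k :
  H B j k = w ^+ (j * k) * expi (B j k).
Proof. by rewrite !mxE. Qed.

Lemma norm_hadamard_exp_fourier (B : 'M[R]_d) j k : `|H B j k| = 1.
Proof.
by rewrite hadamard_exp_fourierE normrM normrX !norm_expi expr1n mulr1.
Qed.

Lemma hadamard_exp_fourier_dot (B : 'M[R]_d) (k l : 'I_d) : (l <= k)%N ->
  \sum_(j < d) H B j k * (H B j l)^* =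
  \sum_(j < d) w ^+ (j * (k - l)) * expi (B j k - B j l).
Proof.
move=> l_le_k; apply: eq_bigr => j _.
rewrite !hadamard_exp_fourierE !expiX -!expiD expiJ -expiD; congr expi.
by rewrite mulnBr natrB ?leq_mul2l ?l_le_k ?orbT // !natrM; ring.
Qed.

Lemma cols_orthogonal_lt (M : 'M[R[i]]_d) :
  (forall k l : 'I_d, (l < k)%N -> \sum_(j < d) M j k * (M j l)^* = 0) ->
  forall k l : 'I_d, k != l -> \sum_(j < d) M j k * (M j l)^* = 0.
Proof.
move=> orth_lt k l; rewrite neq_ltn => /orP [k_lt_l|]; last exact: orth_lt.
transitivity (\sum_(j < d) M j l * (M j k)^*)^*; last by rewrite orth_lt ?conjC0.
by rewrite rmorph_sum; apply: eq_bigr => j _; rewrite rmorphM /= conjCK mulrC.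
Qed.

Lemma is_complex_hadamard_fourier_exp (B : 'M[R]_d) :
  (forall k l : 'I_d, (l < k)%N ->
     \sum_(j < d) w ^+ (j * (k - l)) * expi (B j k - B j l) = 0) ->
  is_complex_hadamard (H B).
Proof.
move=> orth; split; first exact: norm_hadamard_exp_fourier.
apply: cols_orthogonal_lt => k l l_lt_k.
by rewrite hadamard_exp_fourier_dot ?orth // ltnW.
Qed.

End FourierHadamard.

Section RxiColumns.
Variables (R : realType) (n : nat) (xi : nat -> R).
Hypothesis n_gt0 : (0 < n)%N.
Local Notation w := (fourier_root R n.*2).

Let xi_col k : R := if (k %% n == 0)%N then 0 else xi (k %% n).

Let xi_colDn k : xi_col (k + n) = xi_col k.
Proof. by rewrite /xi_col modnDr. Qed.

Let RxiE j k : Rxi n xi j k = if odd j then xi_col k else 0.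
Proof. by rewrite mxE; case: odd. Qed.

Lemma Rxi_fourier_orthogonal (k l : 'I_n.*2) : (l < k)%N ->
  \sum_(j < n.*2) w ^+ (j * (k - l)) * expi (Rxi n xi j k - Rxi n xi j l) = 0.
Proof.
move=> l_lt_k; have k_lt := ltn_ord k.
set m := (k - l)%N; set c := xi_col k - xi_col l.
pose F j := w ^+ (j * m) * expi (if odd j then c else 0).
transitivity (\sum_(j < n.*2) F j).
  by apply: eq_bigr => j _; rewrite !RxiE /F; case: odd; rewrite ?subrr.
rewrite sum_double_even_odd.
transitivity (\sum_(t < n) (w ^+ m.*2) ^+ t * (1 + w ^+ m * expi c)).
  apply: eq_bigr => t _; rewrite /F /= odd_double /= expi0 mulr1.
  rewrite -exprM mulrDr mulr1 mulrA -exprD; congr (w ^+ _ + w ^+ _ * _); nia.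
rewrite -mulr_suml; have [m_eq_n|m_neq_n] := eqVneq m n.
  have k_eq : nat_of_ord k = (l + n)%N by move: m_eq_n; rewrite /m; lia.
  have -> : c = 0 by rewrite /c k_eq xi_colDn subrr.
  by rewrite expi0 mulr1 m_eq_n fourier_root_half // subrr mulr0.
rewrite sum_unity_root_eq0 ?mul0r //.
  rewrite -exprM (_ : (m.*2 * n = n.*2 * m)%N); last by nia.
  by rewrite exprM fourier_root_exp_order ?double_gt0 // expr1n.
apply: fourier_root_neq1; first by rewrite double_gt0.
by apply: double_modn_double_neq0; rewrite // /m; lia.
Qed.

Lemma trRxi_fourier_orthogonal (k l : 'I_n.*2) : (l < k)%N ->
  \sum_(j < n.*2) w ^+ (j * (k - l)) *
    expi ((Rxi n xi)^T j k - (Rxi n xi)^T j l) = 0.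
Proof.
move=> l_lt_k; have k_lt := ltn_ord k; set m := (k - l)%N.
pose c j := (if odd k then xi_col j else 0) - (if odd l then xi_col j else 0).
pose F j := w ^+ (j * m) * expi (c j).
transitivity (\sum_(j < n.*2) F j).
  by apply: eq_bigr => j _; rewrite ![_^T _ _]mxE !RxiE.
have [same_parity|] := eqVneq (odd k) (odd l).
  under eq_bigr do rewrite /F /c same_parity subrr expi0 mulr1.
  by apply: sum_fourier_root_eq0; rewrite ?double_gt0 // modn_small; lia.
move=> parity; have sign_m : (-1) ^+ m = -1 :> R[i].
  by rewrite -signr_odd oddB ?(ltnW l_lt_k) // -negb_eqb parity.
rewrite sum_double_halves; apply: big1 => t _.
rewrite /F /c !xi_colDn mulnDl exprD (exprM _ n m) fourier_root_half // sign_m.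
by rewrite mulrN1 mulNr addrN.
Qed.

End RxiColumns.

Theorem mainTheorem10 (R : realType) (n : nat) (hn : (0 < n)%N) (xi : nat -> R) :
  is_complex_hadamard (hadamard_exp (fourier_mx R n.*2) (Rxi n xi)) /\
  is_complex_hadamard (hadamard_exp (fourier_mx R n.*2) (Rxi n xi)^T).
Proof.
split; apply: is_complex_hadamard_fourier_exp => k l l_lt_k.
- exact: Rxi_fourier_orthogonal.
- exact: trRxi_fourier_orthogonal.
Qed.
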